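(* Let $E=\mathbb{Q}(i,\sqrt5)$, let $\tau=(1+\sqrt5)/2$, and let $\sigma$ be the automorphism of $E$ with $\sigma(i)=i$ and $\sigma(\sqrt5)=-\sqrt5$. For a real number $N\ge 1$ let $\mathbf{L}(N)$ be the set of numbers $x=(a+bi)+(c+di)\tau\in E$ with $a,b,c,d\in\mathbb{Z}$ and $|a|,|b|,|c|,|d|\le N$. For $x_1,x_2\in E$ put $$X(x_1,x_2)=\begin{pmatrix} x_1 & \sigma(x_1)\\ i\,x_2 & \sigma(x_2)\end{pmatrix},\qquad D(N,N)=\min_{x_1,x_2\in\mathbf{L}(N)\setminus\{0\}}\left|\det X(x_1,x_2)\right|.$$ Then $$\limsup_{N\to\infty}\left(-\frac{\log D(N,N)}{\log N}\right)=2.$$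
   Context: This is the two-user single-antenna Badr–Belfiore multiuser MIMO code; $\det X(x_1,x_2)\neq0$ whenever $x_1,x_2\neq0$, so $D(N,N)>0$. *)

From Stdlib Require Import Reals ZArith.
From Coquelicot Require Import Coquelicot.
Open Scope R_scope.

Definition tau : C := RtoC ((1 + sqrt 5) / 2).
Definition tau_conj : C := RtoC ((1 - sqrt 5) / 2).

Definition elt (a b c d : Z) : C :=
  Cplus (Cplus (RtoC (IZR a)) (Cmult Ci (RtoC (IZR b))))
        (Cmult (Cplus (RtoC (IZR c)) (Cmult Ci (RtoC (IZR d)))) tau).

(* its image under sigma (sigma(i) = i, sigma(sqrt 5) = - sqrt 5), using that
   1, i, tau, i tau is a Q-basis of E *)
Definition sigma_elt (a b c d : Z) : C :=
  Cplus (Cplus (RtoC (IZR a)) (Cmult Ci (RtoC (IZR b))))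
        (Cmult (Cplus (RtoC (IZR c)) (Cmult Ci (RtoC (IZR d)))) tau_conj).

Definition detX (x1 sx1 x2 sx2 : C) : C :=
  Cminus (Cmult x1 sx2) (Cmult (Cmult Ci x2) sx1).

Definition inbox (N : R) (a b c d : Z) : Prop :=
  Rabs (IZR a) <= N /\ Rabs (IZR b) <= N /\ Rabs (IZR c) <= N /\ Rabs (IZR d) <= N.

Definition Dset (N : R) (r : R) : Prop :=
  exists a1 b1 c1 d1 a2 b2 c2 d2 : Z,
    inbox N a1 b1 c1 d1 /\ inbox N a2 b2 c2 d2 /\
    elt a1 b1 c1 d1 <> RtoC 0 /\ elt a2 b2 c2 d2 <> RtoC 0 /\
    r = Cmod (detX (elt a1 b1 c1 d1) (sigma_elt a1 b1 c1 d1)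
                   (elt a2 b2 c2 d2) (sigma_elt a2 b2 c2 d2)).

(* D(N,N): the minimum of the (finite, nonempty) set Dset N, taken as its infimum *)
Definition DNN (N : R) : R := real (Glb_Rbar (Dset N)).

Definition sup_from (f : R -> R) (M : R) : Rbar :=
  Rbar_lub (fun y => exists N, M <= N /\ y = Finite (f N)).
Definition limsup_infty (f : R -> R) : Rbar :=
  Rbar_glb (fun z => exists M, z = sup_from f M).

(* Lower bound on D: det X(x1,x2) lies in Z[i][tau], and its norm
   det sigma(det) = - i (u^2 + sigma(u)^2), u = x1 sigma(x2), is a nonzero Gaussian integer
   because sqrt(-5) is not in Q(i).  As |sigma(det)| <= 48 N^2, D(N,N) >= 1 / (48 N^2) and the
   limsup is at most 2.

   Upper bound: iterating y^5 - 1 = (y - 1) (y^2 + tau y + 1) (y^2 + sigma(tau) y + 1) gives a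
   balanced factorisation tau^(4e+1) - 1 = G H in Z[tau], with |G|, |H| <= 2 4^j phi^(2e) and
   |sigma G|, |sigma H| <= 2 4^j.  Then x1 = sigma(G) tau^e and x2 = H sigma(tau)^(e+1) (i tau - 1)
   have coordinates O(4^j phi^e), while det X(x1,x2) = 2 psi^(2e) (1 - i psi) has size about
   phi^(-2e).  Since e >= j^2, -log D / log N tends to 2 along this sequence. *)

From Stdlib Require Import Reals Lra Lia Nsatz ZArith Wf_nat.
From Coquelicot Require Import Coquelicot.
Open Scope R_scope.

Definition phi := (1 + sqrt 5) / 2.
Definition psi := (1 - sqrt 5) / 2.

Lemma sqrt5_sq : sqrt 5 * sqrt 5 = 5.
Proof. apply sqrt_sqrt; lra. Qed.

Lemma sqrt5_bounds : 2 < sqrt 5 < 3.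
Proof.
  split.
  - rewrite <- (sqrt_square 2) by lra. apply sqrt_lt_1; lra.
  - rewrite <- (sqrt_square 3) by lra. apply sqrt_lt_1; lra.
Qed.

Lemma phi_sq : phi * phi = phi + 1.
Proof. unfold phi. pose proof sqrt5_sq. nra. Qed.

Lemma psi_sq : psi * psi = psi + 1.
Proof. unfold psi. pose proof sqrt5_sq. nra. Qed.

Lemma psi_eq : psi = 1 - phi.
Proof. unfold phi, psi. lra. Qed.

Lemma phi_eq : phi = 1 - psi.
Proof. unfold phi, psi. lra. Qed.

Lemma phi_psi_prod : phi * psi = -1.
Proof. unfold phi, psi. pose proof sqrt5_sq. nra. Qed.

Lemma phi_bounds : 3/2 < phi < 2.
Proof. unfold phi. pose proof sqrt5_bounds. lra. Qed.

Lemma psi_bounds : -1 < psi < -1/2.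
Proof. unfold psi. pose proof sqrt5_bounds. lra. Qed.

Lemma abs_psi_pow n : Rabs (psi ^ n) * phi ^ n = 1.
Proof.
  pose proof phi_bounds.
  rewrite <- (Rabs_right (phi ^ n)) by (left; apply pow_lt; lra).
  rewrite <- Rabs_mult, <- Rpow_mult_distr, Rmult_comm, phi_psi_prod.
  apply pow_1_abs.
Qed.

Lemma square_mod5_eq0 p : ((p * p) mod 5 = 0 -> p mod 5 = 0)%Z.
Proof.
  rewrite Z.mul_mod by lia.
  pose proof (Z.mod_pos_bound p 5 ltac:(lia)).
  assert (Hr : (p mod 5 = 0 \/ p mod 5 = 1 \/ p mod 5 = 2 \/ p mod 5 = 3 \/ p mod 5 = 4)%Z) by lia.
  destruct Hr as [E|[E|[E|[E|E]]]]; rewrite E; easy.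
Qed.

Lemma sq_eq_5sq p q : (p * p = 5 * (q * q))%Z -> q = 0%Z.
Proof.
  remember (Z.to_nat (Z.abs q)) as n eqn:Hn.
  revert p q Hn. induction n as [n IH] using lt_wf_ind. intros p q Hn Hpq.
  destruct (Z.eq_dec q 0) as [|Hq]; [assumption|exfalso].
  assert (Hp : (p mod 5 = 0)%Z) by (apply square_mod5_eq0; rewrite Hpq, Z.mul_comm, Z.mod_mul; lia).
  destruct (proj1 (Z.mod_divide p 5 ltac:(lia)) Hp) as [p1 ->].
  assert (Hq1 : (q * q = 5 * (p1 * p1))%Z) by lia.
  assert (p1 = 0%Z) by (apply (IH (Z.to_nat (Z.abs p1)) ltac:(nia) q p1 eq_refl Hq1)).
  nia.
Qed.

Record zt := ZT { zt_a : Z; zt_b : Z }.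

Definition zt_val (r : R) (x : zt) : R := IZR (zt_a x) + IZR (zt_b x) * r.

Definition zt_one := ZT 1 0.
Definition zt_tau := ZT 0 1.
Definition zt_add (x y : zt) := ZT (zt_a x + zt_a y) (zt_b x + zt_b y).
Definition zt_mul (x y : zt) :=
  ZT (zt_a x * zt_a y + zt_b x * zt_b y)
     (zt_a x * zt_b y + zt_b x * zt_a y + zt_b x * zt_b y).
Definition zt_conj (x : zt) := ZT (zt_a x + zt_b x) (- zt_b x).
Fixpoint zt_pow (x : zt) (n : nat) : zt :=
  match n with O => zt_one | S k => zt_mul x (zt_pow x k) end.

Lemma zt_val_conj r x : zt_val r (zt_conj x) = zt_val (1 - r) x.
Proof. unfold zt_val; simpl. rewrite plus_IZR, opp_IZR. ring. Qed.

Lemma zt_val_one r : zt_val r zt_one = 1.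
Proof. unfold zt_val; simpl. ring. Qed.

Lemma zt_val_tau r : zt_val r zt_tau = r.
Proof. unfold zt_val; simpl. ring. Qed.

Lemma zt_val_add r x y : zt_val r (zt_add x y) = zt_val r x + zt_val r y.
Proof. unfold zt_val; simpl. rewrite !plus_IZR. ring. Qed.

Section ZtRoot.

Variable r : R.
Hypothesis r_sq : r * r = r + 1.

Lemma zt_val_mul x y : zt_val r (zt_mul x y) = zt_val r x * zt_val r y.
Proof. unfold zt_val; simpl. rewrite !plus_IZR, !mult_IZR. nsatz. Qed.

Lemma zt_val_pow x n : zt_val r (zt_pow x n) = zt_val r x ^ n.
Proof. induction n; simpl; [apply zt_val_one|]. rewrite zt_val_mul, IHn. ring. Qed.

End ZtRoot.

(* [b sqrt 5] is the difference of the two conjugate values of [a + b tau]. *)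
Lemma zt_coord_bound x :
  Rabs (IZR (zt_a x)) <= 2 * (Rabs (zt_val phi x) + Rabs (zt_val psi x)) /\
  Rabs (IZR (zt_b x)) <= 2 * (Rabs (zt_val phi x) + Rabs (zt_val psi x)).
Proof.
  destruct x as [a b]. unfold zt_val; simpl.
  pose proof sqrt5_bounds. pose proof phi_bounds.
  set (u := IZR a + IZR b * phi). set (v := IZR a + IZR b * psi).
  assert (Hb : Rabs (IZR b) * sqrt 5 <= Rabs u + Rabs v).
  { rewrite <- (Rabs_right (sqrt 5)), <- Rabs_mult by lra.
    replace (IZR b * sqrt 5) with (u - v) by (unfold u, v, phi, psi; field).
    unfold Rminus. rewrite <- (Rabs_Ropp v). apply Rabs_triang. }
  pose proof (Rabs_pos (IZR b)). pose proof (Rabs_pos u). pose proof (Rabs_pos v).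
  split; [|nra].
  replace (IZR a) with (u - IZR b * phi) by (unfold u; ring).
  unfold Rminus. eapply Rle_trans; [apply Rabs_triang|].
  rewrite Rabs_Ropp, Rabs_mult, (Rabs_right phi) by lra. nra.
Qed.

Lemma zt_val_psi_eq0 x : zt_val psi x = 0 -> x = ZT 0 0.
Proof.
  destruct x as [a b]. unfold zt_val, psi; simpl. intro H. pose proof sqrt5_sq.
  assert (Hb : IZR b * sqrt 5 = IZR (2 * a + b)) by (rewrite plus_IZR, mult_IZR; lra).
  assert (E : IZR ((2 * a + b) * (2 * a + b)) = IZR (5 * (b * b))).
  { rewrite mult_IZR, <- Hb, !mult_IZR. nra. }
  apply eq_IZR, sq_eq_5sq in E. subst b.
  rewrite Rmult_0_l, Rplus_0_r in H. apply eq_IZR in H. now subst.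
Qed.

(* [ZIT a b c d] is [(a + b i) + (c + d i) tau]. *)
Record zit := ZIT { zi_a : Z; zi_b : Z; zi_c : Z; zi_d : Z }.

Definition zi_val (r : R) (x : zit) : C :=
  (IZR (zi_a x) + IZR (zi_c x) * r, IZR (zi_b x) + IZR (zi_d x) * r).

Definition zi_mul (x y : zit) : zit :=
  let (a, b, c, d) := x in let (a', b', c', d') := y in
  ZIT (a * a' - b * b' + (c * c' - d * d'))
      (a * b' + b * a' + (c * d' + d * c'))
      (a * c' - b * d' + (c * a' - d * b') + (c * c' - d * d'))
      (a * d' + b * c' + (c * b' + d * a') + (c * d' + d * c')).
Definition zi_sub (x y : zit) : zit :=
  let (a, b, c, d) := x in let (a', b', c', d') := y in
  ZIT (a - a') (b - b') (c - c') (d - d').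
Definition zi_imul (x : zit) : zit := let (a, b, c, d) := x in ZIT (- b) a (- d) c.
Definition zi_conj (x : zit) : zit := let (a, b, c, d) := x in ZIT (a + c) (b + d) (- c) (- d).

Definition zi_det (x1 x2 : zit) : zit :=
  zi_sub (zi_mul x1 (zi_conj x2)) (zi_imul (zi_mul x2 (zi_conj x1))).

Lemma zi_val_conj r x : zi_val r (zi_conj x) = zi_val (1 - r) x.
Proof.
  destruct x as [a b c d]. unfold zi_val; simpl.
  rewrite !plus_IZR, !opp_IZR. f_equal; ring.
Qed.

Section ZitRoot.

Variable r : R.
Hypothesis r_sq : r * r = r + 1.

Lemma zi_val_mul x y : zi_val r (zi_mul x y) = (zi_val r x * zi_val r y)%C.
Proof.
  destruct x as [a b c d], y as [a' b' c' d']. unfold zi_val, Cmult; simpl.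
  f_equal; rewrite ?plus_IZR, ?minus_IZR, ?mult_IZR; nsatz.
Qed.

Lemma zi_val_det x1 x2 :
  zi_val r (zi_det x1 x2) =
  detX (zi_val r x1) (zi_val (1 - r) x1) (zi_val r x2) (zi_val (1 - r) x2).
Proof.
  unfold zi_det, detX. rewrite <- !zi_val_conj, <- Cmult_assoc, <- !zi_val_mul.
  destruct (zi_mul x1 (zi_conj x2)) as [a b c d], (zi_mul x2 (zi_conj x1)) as [a' b' c' d'].
  unfold zi_val, Cminus, Cplus, Copp, Cmult, Ci; simpl.
  f_equal; rewrite ?minus_IZR, ?opp_IZR; ring.
Qed.

End ZitRoot.

Lemma elt_zi_val a b c d : elt a b c d = zi_val phi (ZIT a b c d).
Proof. unfold elt, tau, zi_val, Cplus, Cmult, Ci, RtoC; simpl. fold phi. f_equal; ring. Qed.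

Lemma sigma_elt_zi_val a b c d : sigma_elt a b c d = zi_val psi (ZIT a b c d).
Proof. unfold sigma_elt, tau_conj, zi_val, Cplus, Cmult, Ci, RtoC; simpl. fold psi. f_equal; ring. Qed.

(* For [u = P + Q tau] with Gaussian integers [P], [Q], the Gaussian integer
   [u^2 + sigma(u)^2 = 2 P^2 + 2 P Q + 3 Q^2] has real part [qf_re u] and imaginary part [qf_im u]. *)
Definition qf_re (u : zit) : Z :=
  let (a, b, c, d) := u in (2 * (a * a - b * b) + 2 * (a * c - b * d) + 3 * (c * c - d * d))%Z.
Definition qf_im (u : zit) : Z :=
  let (a, b, c, d) := u in (4 * a * b + 2 * (a * d + b * c) + 6 * c * d)%Z.

(* [det = u - i sigma(u)] with [u = x1 sigma(x2)], so [det sigma(det) = - i (u^2 + sigma(u)^2)]. *)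
Lemma zi_det_norm x1 x2 :
  zi_mul (zi_det x1 x2) (zi_conj (zi_det x1 x2)) =
  ZIT (qf_im (zi_mul x1 (zi_conj x2))) (- qf_re (zi_mul x1 (zi_conj x2))) 0 0.
Proof.
  destruct x1 as [a b c d], x2 as [a' b' c' d'].
  unfold zi_det, zi_mul, zi_conj, zi_sub, zi_imul, qf_re, qf_im. f_equal; ring.
Qed.

(* [2 P^2 + 2 P Q + 3 Q^2 = 0] means [(2P + Q)^2 = -5 Q^2], impossible unless [Q = 0]. *)
Lemma qf_eq0 u : qf_re u = 0%Z -> qf_im u = 0%Z -> u = ZIT 0 0 0 0.
Proof.
  destruct u as [a b c d]. unfold qf_re, qf_im. intros Hre Him.
  set (X := (2 * a + c)%Z). set (Y := (2 * b + d)%Z).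
  assert (E1 : (X * X - Y * Y = 5 * (d * d - c * c))%Z).
  { transitivity (2 * (2 * (a * a - b * b) + 2 * (a * c - b * d) + 3 * (c * c - d * d))
                  + 5 * (d * d - c * c))%Z; [unfold X, Y; ring | rewrite Hre; ring]. }
  assert (E2 : (2 * (X * Y) = - 10 * (c * d))%Z).
  { transitivity ((4 * a * b + 2 * (a * d + b * c) + 6 * c * d) * 2 - 10 * (c * d))%Z;
      [unfold X, Y; ring | rewrite Him; ring]. }
  assert (E3 : (X * X + Y * Y = 5 * (c * c + d * d))%Z).
  { assert (Esq : ((X * X + Y * Y) * (X * X + Y * Y) =
                   (5 * (c * c + d * d)) * (5 * (c * c + d * d)))%Z).
    { transitivity ((X * X - Y * Y) * (X * X - Y * Y) + (2 * (X * Y)) * (2 * (X * Y)))%Z;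
        [ring | rewrite E1, E2; ring]. }
    pose proof (Z.square_nonneg X). pose proof (Z.square_nonneg Y).
    pose proof (Z.square_nonneg c). pose proof (Z.square_nonneg d).
    apply (f_equal Z.sqrt) in Esq.
    rewrite (Z.sqrt_square (X * X + Y * Y)), (Z.sqrt_square (5 * (c * c + d * d))) in Esq;
      lia. }
  assert (Hd : d = 0%Z) by (apply (sq_eq_5sq X); lia).
  assert (Hc : c = 0%Z) by (apply (sq_eq_5sq Y); lia).
  subst c d. unfold X, Y in E3.
  assert (a = 0%Z /\ b = 0%Z) as [-> ->] by nia.
  reflexivity.
Qed.

Lemma zi_val_psi_eq0 x : zi_val psi x = RtoC 0 -> zi_val phi x = RtoC 0.
Proof.
  destruct x as [a b c d]. unfold zi_val, RtoC; simpl. intros [= Hac Hbd].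
  apply (zt_val_psi_eq0 (ZT a c)) in Hac. apply (zt_val_psi_eq0 (ZT b d)) in Hbd.
  injection Hac as -> ->. injection Hbd as -> ->. f_equal; ring.
Qed.

Lemma Cmod_Zpair_ge1 (m n : Z) : (m <> 0 \/ n <> 0)%Z -> 1 <= Cmod (IZR m, IZR n).
Proof.
  intro Hmn. unfold Cmod; simpl. rewrite <- sqrt_1 at 1. apply sqrt_le_1_alt.
  rewrite !Rmult_1_r, <- !mult_IZR, <- plus_IZR. apply IZR_le. nia.
Qed.

Lemma zi_det_norm_ge1 x1 x2 :
  zi_val phi x1 <> RtoC 0 -> zi_val phi x2 <> RtoC 0 ->
  1 <= Cmod (zi_val phi (zi_det x1 x2)) * Cmod (zi_val psi (zi_det x1 x2)).
Proof.
  intros Hx1 Hx2.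
  rewrite <- Cmod_mult, psi_eq, <- zi_val_conj, <- zi_val_mul, zi_det_norm by exact phi_sq.
  set (u := zi_mul x1 (zi_conj x2)).
  replace (zi_val phi _) with (IZR (qf_im u), IZR (- qf_re u))
    by (unfold zi_val; simpl; f_equal; ring).
  apply Cmod_Zpair_ge1.
  destruct (Z.eq_dec (qf_im u) 0) as [Him|]; [|now left].
  destruct (Z.eq_dec (qf_re u) 0) as [Hre|]; [|right; lia].
  exfalso. apply (Cmult_neq_0 _ _ Hx1 (fun H => Hx2 (zi_val_psi_eq0 _ H))).
  rewrite psi_eq, <- zi_val_conj, <- zi_val_mul by exact phi_sq.
  fold u. rewrite (qf_eq0 u Hre Him). unfold zi_val, RtoC; simpl. f_equal; ring.
Qed.

Lemma Cmod_le_abs_sum (x y : R) : Cmod (x, y) <= Rabs x + Rabs y.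
Proof.
  unfold Cmod; simpl. pose proof (Rabs_pos x). pose proof (Rabs_pos y).
  rewrite <- (sqrt_square (Rabs x + Rabs y)) by lra. apply sqrt_le_1_alt.
  assert (x * x = Rabs x * Rabs x) by (rewrite <- Rabs_mult, Rabs_right; nra).
  assert (y * y = Rabs y * Rabs y) by (rewrite <- Rabs_mult, Rabs_right; nra).
  rewrite !Rmult_1_r. nra.
Qed.

Lemma zi_val_bound r rho N x :
  Rabs r <= rho -> inbox N (zi_a x) (zi_b x) (zi_c x) (zi_d x) ->
  Cmod (zi_val r x) <= 2 * (1 + rho) * N.
Proof.
  destruct x as [a b c d]. intros Hr (Ha & Hb & Hc & Hd). unfold zi_val; simpl in *.
  eapply Rle_trans; [apply Cmod_le_abs_sum|].
  pose proof (Rabs_triang (IZR a) (IZR c * r)). pose proof (Rabs_triang (IZR b) (IZR d * r)).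
  rewrite Rabs_mult in *. pose proof (Rabs_pos r).
  pose proof (Rabs_pos (IZR c)). pose proof (Rabs_pos (IZR d)). nra.
Qed.

Lemma Cmod_detX_le x sx y sy :
  Cmod (detX x sx y sy) <= Cmod x * Cmod sy + Cmod y * Cmod sx.
Proof.
  unfold detX, Cminus. eapply Rle_trans; [apply Cmod_triangle|].
  rewrite Cmod_opp, !Cmod_mult, Cmod_Ci. lra.
Qed.

Lemma Dset_ge N d : 0 < N -> Dset N d -> / (48 * (N * N)) <= d.
Proof.
  intros HN (a1 & b1 & c1 & d1 & a2 & b2 & c2 & d2 & I1 & I2 & Z1 & Z2 & ->).
  rewrite !elt_zi_val in *. rewrite !sigma_elt_zi_val.
  set (x1 := ZIT a1 b1 c1 d1) in *. set (x2 := ZIT a2 b2 c2 d2) in *.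
  rewrite psi_eq, <- zi_val_det by exact phi_sq.
  pose proof (zi_det_norm_ge1 x1 x2 Z1 Z2) as Hnorm.
  assert (Hconj : Cmod (zi_val psi (zi_det x1 x2)) <= 48 * (N * N)).
  { rewrite zi_val_det, <- phi_eq by exact psi_sq.
    eapply Rle_trans; [apply Cmod_detX_le|].
    pose proof phi_bounds. pose proof psi_bounds.
    assert (Hphi : Rabs phi <= 2) by (rewrite Rabs_right; lra).
    assert (Hpsi : Rabs psi <= 1) by (rewrite Rabs_left; lra).
    assert (Hcross : forall y z, Cmod (zi_val psi y) <= 2 * (1 + 1) * N ->
                                 Cmod (zi_val phi z) <= 2 * (1 + 2) * N ->
                                 Cmod (zi_val psi y) * Cmod (zi_val phi z) <= 24 * (N * N)).
    { intros y z Hy Hz. pose proof (Cmod_ge_0 (zi_val psi y)).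
      apply Rle_trans with ((2 * (1 + 1) * N) * (2 * (1 + 2) * N)); [|lra].
      apply Rmult_le_compat; auto using Cmod_ge_0. }
    pose proof (Hcross _ _ (zi_val_bound _ _ _ x1 Hpsi I1) (zi_val_bound _ _ _ x2 Hphi I2)).
    pose proof (Hcross _ _ (zi_val_bound _ _ _ x2 Hpsi I2) (zi_val_bound _ _ _ x1 Hphi I1)).
    lra. }
  pose proof (Cmod_ge_0 (zi_val phi (zi_det x1 x2))).
  pose proof (Cmod_ge_0 (zi_val psi (zi_det x1 x2))).
  apply (Rmult_le_reg_r (48 * (N * N))); [nra|]. rewrite Rinv_l by nra. nra.
Qed.

Fixpoint expo (j : nat) : nat :=
  match j with O => O | S k => (5 * expo k + 1)%nat end.

Definition quad (c y : zt) : zt := zt_add (zt_add (zt_mul y y) (zt_mul c y)) zt_one.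

(* A balanced factorisation of [tau^(4 expo j + 1) - 1]: since [4 expo (j+1) + 1 = 5 (4 expo j + 1)],
   each step uses [y^5 - 1 = (y - 1) (y^2 + tau y + 1) (y^2 + sigma(tau) y + 1)]. *)
Fixpoint factors (j : nat) : zt * zt :=
  match j with
  | O => (zt_one, ZT (-1) 1)
  | S k =>
      let y := zt_pow zt_tau (4 * expo k + 1) in
      (zt_mul (fst (factors k)) (quad zt_tau y),
       zt_mul (snd (factors k)) (quad (zt_conj zt_tau) y))
  end.

Lemma quad_bound c y : Rabs c <= 2 -> Rabs (y * y + c * y + 1) <= (Rabs y + 1) ^ 2.
Proof.
  intro Hc. eapply Rle_trans; [apply Rabs_triang|]. rewrite Rabs_R1.
  eapply Rle_trans; [apply Rplus_le_compat_r, Rabs_triang|].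
  rewrite !Rabs_mult. pose proof (Rabs_pos y). nra.
Qed.

Section Factors.

Variable r : R.
Hypothesis r_sq : r * r = r + 1.

Lemma zt_val_quad c y :
  zt_val r (quad c y) = zt_val r y * zt_val r y + zt_val r c * zt_val r y + 1.
Proof. unfold quad. rewrite !zt_val_add, !zt_val_mul, zt_val_one by exact r_sq. reflexivity. Qed.

Lemma quint_factor y :
  (y - 1) * ((y * y + r * y + 1) * (y * y + (1 - r) * y + 1)) = y ^ 5 - 1.
Proof. simpl. nsatz. Qed.

Lemma factors_prod j :
  zt_val r (fst (factors j)) * zt_val r (snd (factors j)) = r ^ (4 * expo j + 1) - 1.
Proof.
  induction j as [|j IH]; [unfold zt_val; simpl; ring|].
  cbn [factors fst snd].
  rewrite !zt_val_mul, !zt_val_quad, zt_val_conj, !zt_val_pow, !zt_val_tau by exact r_sq.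
  replace (4 * expo (S j) + 1)%nat with ((4 * expo j + 1) * 5)%nat by (simpl; lia).
  rewrite pow_mult, <- quint_factor, <- IH. ring.
Qed.

Lemma factors_bound rho j :
  1 <= rho -> Rabs r <= rho -> Rabs r <= 2 -> Rabs (1 - r) <= 2 ->
  Rabs (zt_val r (fst (factors j))) <= 2 * 4 ^ j * rho ^ (2 * expo j) /\
  Rabs (zt_val r (snd (factors j))) <= 2 * 4 ^ j * rho ^ (2 * expo j).
Proof.
  intros Hrho Hr Hr2 Hs2. induction j as [|j [IHG IHH]].
  - unfold zt_val; simpl. rewrite Rmult_0_l, Rplus_0_r, Rmult_1_l, Rabs_R1.
    replace (-1 + r) with (- (1 - r)) by ring. rewrite Rabs_Ropp. lra.
  - cbn [factors fst snd].
    rewrite !zt_val_mul, !zt_val_quad, zt_val_conj, !zt_val_pow, !zt_val_tau by exact r_sq.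
    set (m := (4 * expo j + 1)%nat).
    assert (Hm : (2 * expo (S j) = 2 * expo j + 2 * m)%nat) by (unfold m; simpl; lia).
    assert (Hy : (Rabs (r ^ m) + 1) ^ 2 <= 4 * rho ^ (2 * m)).
    { rewrite <- RPow_abs. replace (2 * m)%nat with (m + m)%nat by lia. rewrite pow_add.
      assert (Rabs r ^ m <= rho ^ m) by (apply pow_incr; split; [apply Rabs_pos|exact Hr]).
      assert (1 <= rho ^ m) by (apply pow_R1_Rle; exact Hrho).
      assert (0 <= Rabs r ^ m) by (apply pow_le, Rabs_pos).
      simpl. nra. }
    assert (Hstep : forall c g, Rabs c <= 2 -> Rabs g <= 2 * 4 ^ j * rho ^ (2 * expo j) ->
              Rabs (g * (r ^ m * r ^ m + c * r ^ m + 1)) <= 2 * 4 ^ S j * rho ^ (2 * expo (S j))).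
    { intros c g Hc Hg. rewrite Rabs_mult, Hm, pow_add.
      apply Rle_trans with ((2 * 4 ^ j * rho ^ (2 * expo j)) * (4 * rho ^ (2 * m))).
      - apply Rmult_le_compat; try apply Rabs_pos; [exact Hg|].
        eapply Rle_trans; [apply quad_bound, Hc|exact Hy].
      - simpl. lra. }
    split; apply Hstep; assumption.
Qed.

End Factors.

Definition zi_of_zt (x : zt) : zit := ZIT (zt_a x) 0 (zt_b x) 0.

(* [zi_twist w] is [w (i tau - 1)]. *)
Definition zi_twist (w : zt) : zit := ZIT (- zt_a w) (zt_b w) (- zt_b w) (zt_a w + zt_b w).

Definition witness1 (j : nat) : zt :=
  zt_mul (zt_conj (fst (factors j))) (zt_pow zt_tau (expo j)).
Definition witness2 (j : nat) : zt :=
  zt_mul (snd (factors j)) (zt_pow (zt_conj zt_tau) (S (expo j))).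

Lemma conj_root r : r * r = r + 1 -> (1 - r) * (1 - r) = (1 - r) + 1.
Proof. intro. nra. Qed.

Lemma pow_conj_identity r s e :
  r * s = -1 -> (s ^ (4 * e + 1) - 1) * r ^ (2 * e + 1) = - (r ^ (2 * e + 1) + s ^ (2 * e)).
Proof.
  intro Hrs.
  assert (Hodd : (r * s) ^ (2 * e + 1) = -1)
    by (rewrite Hrs, Nat.add_1_r; apply pow_1_odd).
  replace (4 * e + 1)%nat with ((2 * e + 1) + 2 * e)%nat by lia.
  rewrite pow_add. rewrite Rpow_mult_distr in Hodd.
  transitivity (r ^ (2 * e + 1) * s ^ (2 * e + 1) * s ^ (2 * e) - r ^ (2 * e + 1)); [ring|].
  rewrite Hodd. ring.
Qed.

Lemma zi_val_of_zt r x : zi_val r (zi_of_zt x) = (zt_val r x, 0).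
Proof. unfold zi_val, zt_val; simpl. f_equal; ring. Qed.

Section Witness.

Variable r : R.
Hypothesis r_sq : r * r = r + 1.

Lemma zi_val_twist w : zi_val r (zi_twist w) = (- zt_val r w, r * zt_val r w).
Proof.
  unfold zi_val, zt_val; simpl. rewrite !opp_IZR, plus_IZR.
  f_equal; [ring|]. transitivity (IZR (zt_a w) * r + IZR (zt_b w) * (r * r)); [rewrite r_sq|]; ring.
Qed.

Lemma witness1_val j : zt_val r (witness1 j) = zt_val (1 - r) (fst (factors j)) * r ^ expo j.
Proof. unfold witness1. rewrite zt_val_mul, zt_val_conj, zt_val_pow, zt_val_tau by exact r_sq. reflexivity. Qed.

Lemma witness2_val j : zt_val r (witness2 j) = zt_val r (snd (factors j)) * (1 - r) ^ S (expo j).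
Proof.
  unfold witness2. rewrite zt_val_mul, zt_val_pow, zt_val_conj, zt_val_tau by exact r_sq.
  reflexivity.
Qed.

End Witness.

Lemma witness_cross r j : r * r = r + 1 ->
  zt_val r (witness1 j) * zt_val (1 - r) (witness2 j) =
  - (r ^ (2 * expo j + 1) + (1 - r) ^ (2 * expo j)).
Proof.
  intro r_sq.
  rewrite (witness1_val r r_sq), (witness2_val (1 - r) (conj_root r r_sq)).
  replace (1 - (1 - r)) with r by ring.
  rewrite <- (pow_conj_identity r (1 - r)) by nra.
  rewrite <- (factors_prod (1 - r) (conj_root r r_sq)).
  replace (2 * expo j + 1)%nat with (expo j + S (expo j))%nat by lia. rewrite pow_add. ring.
Qed.

Lemma detX_twist r s m u u' v v' :
  r * s = -1 ->
  u * v' = - (r ^ S m + s ^ m) ->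
  u' * v = - (s ^ S m + r ^ m) ->
  detX (u, 0) (u', 0) (- v, r * v) (- v', s * v') = (2 * s ^ m, -2 * s ^ S m).
Proof.
  intros Hrs Huv Hvu.
  unfold detX, Cminus, Cplus, Copp, Cmult, Ci; cbn [fst snd pow]. f_equal.
  - transitivity (- (u * v') + r * (u' * v)); [ring|]. rewrite Huv, Hvu.
    transitivity (2 * s ^ m - (r * s + 1) * s ^ m); [cbn [pow]; ring | rewrite Hrs; ring].
  - transitivity (s * (u * v') + u' * v); [ring|]. rewrite Huv, Hvu.
    transitivity (-2 * (s * s ^ m) - (r * s + 1) * r ^ m); [cbn [pow]; ring | rewrite Hrs; ring].
Qed.

Lemma inbox_of_zt N x :
  2 * (Rabs (zt_val phi x) + Rabs (zt_val psi x)) <= N ->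
  inbox N (zi_a (zi_of_zt x)) (zi_b (zi_of_zt x)) (zi_c (zi_of_zt x)) (zi_d (zi_of_zt x)).
Proof.
  intro HN. destruct (zt_coord_bound x). unfold inbox; simpl. rewrite Rabs_R0.
  pose proof (Rabs_pos (zt_val phi x)). pose proof (Rabs_pos (zt_val psi x)).
  repeat split; lra.
Qed.

Lemma inbox_twist N w :
  4 * (Rabs (zt_val phi w) + Rabs (zt_val psi w)) <= N ->
  inbox N (zi_a (zi_twist w)) (zi_b (zi_twist w)) (zi_c (zi_twist w)) (zi_d (zi_twist w)).
Proof.
  intro HN. destruct (zt_coord_bound w). unfold inbox; simpl.
  rewrite !opp_IZR, !Rabs_Ropp, plus_IZR.
  pose proof (Rabs_triang (IZR (zt_a w)) (IZR (zt_b w))).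
  pose proof (Rabs_pos (zt_val phi w)). pose proof (Rabs_pos (zt_val psi w)).
  repeat split; lra.
Qed.

Lemma witness_bounds j :
  Rabs (zt_val phi (witness1 j)) + Rabs (zt_val psi (witness1 j)) <= 4 * (4 ^ j * phi ^ expo j) /\
  Rabs (zt_val phi (witness2 j)) + Rabs (zt_val psi (witness2 j)) <= 6 * (4 ^ j * phi ^ expo j).
Proof.
  pose proof phi_bounds as Bphi. pose proof psi_bounds as Bpsi.
  assert (Hpsi : Rabs psi <= 1) by (rewrite Rabs_left; lra).
  destruct (factors_bound phi phi_sq phi j) as [BGphi BHphi];
    [lra | rewrite Rabs_right; lra | rewrite Rabs_right; lra | rewrite <- psi_eq; lra |].
  destruct (factors_bound psi psi_sq 1 j) as [BGpsi BHpsi];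
    [lra | lra | lra | rewrite <- phi_eq, Rabs_right; lra |].
  rewrite pow1, Rmult_1_r in BGpsi, BHpsi.
  rewrite (witness1_val phi phi_sq), (witness1_val psi psi_sq),
    (witness2_val phi phi_sq), (witness2_val psi psi_sq), <- psi_eq, <- phi_eq.
  set (e := expo j) in *.
  set (G := fst (factors j)) in *. set (H := snd (factors j)) in *.
  replace (2 * e)%nat with (e + e)%nat in * by lia. rewrite pow_add in BGphi, BHphi.
  pose proof (abs_psi_pow e) as Hpe.
  assert (P4 : 0 < 4 ^ j) by (apply pow_lt; lra).
  assert (Pe : 0 < phi ^ e) by (apply pow_lt; lra).
  rewrite !Rabs_mult, !(Rabs_right (phi ^ _)) by (left; apply pow_lt; lra).
  rewrite <- !tech_pow_Rmult, !Rabs_mult.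
  pose proof (Rabs_pos (psi ^ e)). pose proof (Rabs_pos psi).
  pose proof (Rabs_pos (zt_val phi G)). pose proof (Rabs_pos (zt_val psi G)).
  pose proof (Rabs_pos (zt_val phi H)). pose proof (Rabs_pos (zt_val psi H)).
  assert (B1 : Rabs (zt_val psi G) * phi ^ e <= 2 * (4 ^ j * phi ^ e))
    by (apply Rle_trans with (2 * 4 ^ j * phi ^ e); [apply Rmult_le_compat_r|]; lra).
  assert (B2 : Rabs (zt_val phi G) * Rabs (psi ^ e) <= 2 * (4 ^ j * phi ^ e)).
  { apply Rle_trans with (2 * 4 ^ j * phi ^ e * phi ^ e * Rabs (psi ^ e)).
    - apply Rmult_le_compat_r; lra.
    - replace (2 * 4 ^ j * phi ^ e * phi ^ e * Rabs (psi ^ e))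
        with (2 * (4 ^ j * phi ^ e) * (Rabs (psi ^ e) * phi ^ e)) by ring.
      rewrite Hpe. lra. }
  assert (B3 : Rabs (zt_val phi H) * (Rabs psi * Rabs (psi ^ e)) <= 2 * (4 ^ j * phi ^ e)).
  { apply Rle_trans with (2 * 4 ^ j * phi ^ e * phi ^ e * (1 * Rabs (psi ^ e))).
    - apply Rmult_le_compat; try nra.
    - replace (2 * 4 ^ j * phi ^ e * phi ^ e * (1 * Rabs (psi ^ e)))
        with (2 * (4 ^ j * phi ^ e) * (Rabs (psi ^ e) * phi ^ e)) by ring.
      rewrite Hpe. lra. }
  assert (B4 : Rabs (zt_val psi H) * (phi * phi ^ e) <= 4 * (4 ^ j * phi ^ e)).
  { apply Rle_trans with (2 * 4 ^ j * (2 * phi ^ e)); [apply Rmult_le_compat; nra | lra]. }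
  lra.
Qed.

Lemma witness_nonzero j : zt_val phi (witness1 j) <> 0 /\ zt_val phi (witness2 j) <> 0.
Proof.
  pose proof phi_bounds. pose proof psi_bounds.
  set (n := (4 * expo j + 1)%nat).
  assert (Hphin : 1 < phi ^ n) by (apply Rlt_pow_R1; unfold n; lia || lra).
  assert (Hpsin : psi ^ n <> 1).
  { intro E. pose proof (abs_psi_pow n) as Hn. rewrite E, Rabs_R1 in Hn. lra. }
  pose proof (factors_prod phi phi_sq j) as Pphi. pose proof (factors_prod psi psi_sq j) as Ppsi.
  fold n in Pphi, Ppsi.
  rewrite (witness1_val phi phi_sq), (witness2_val phi phi_sq), <- psi_eq.
  split; apply Rmult_integral_contrapositive_currified; try (apply pow_nonzero; lra);
    intro Z0; rewrite Z0 in *; lra.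
Qed.

Lemma Dset_witness j :
  exists d, Dset (24 * (4 ^ j * phi ^ expo j)) d /\ d * phi ^ (2 * expo j) <= 4.
Proof.
  set (e := expo j). set (x1 := witness1 j). set (w := witness2 j).
  destruct (witness_bounds j) as [Bx1 Bw]. destruct (witness_nonzero j) as [Nx1 Nw].
  fold e x1 w in Bx1, Bw, Nx1, Nw.
  exists (Cmod (2 * psi ^ (2 * e), -2 * psi ^ S (2 * e))). split.
  - exists (zt_a x1), 0%Z, (zt_b x1), 0%Z, (- zt_a w)%Z, (zt_b w), (- zt_b w)%Z, (zt_a w + zt_b w)%Z.
    rewrite !elt_zi_val, !sigma_elt_zi_val.
    change (ZIT (zt_a x1) 0 (zt_b x1) 0) with (zi_of_zt x1).
    change (ZIT (- zt_a w) (zt_b w) (- zt_b w) (zt_a w + zt_b w)) with (zi_twist w).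
    rewrite !(zi_val_of_zt phi), !(zi_val_of_zt psi), (zi_val_twist phi phi_sq), (zi_val_twist psi psi_sq).
    pose proof (Rabs_pos (zt_val phi w)). pose proof (Rabs_pos (zt_val psi w)).
    split; [apply inbox_of_zt; lra|]. split; [apply inbox_twist; lra|].
    split; [intros [= E]; contradiction|]. split; [intros [= E1 E2]; lra|].
    rewrite (detX_twist phi psi (2 * e)); [reflexivity | exact phi_psi_prod | |].
    + rewrite psi_eq, <- Nat.add_1_r. apply (witness_cross phi j phi_sq).
    + rewrite phi_eq, <- Nat.add_1_r. apply (witness_cross psi j psi_sq).
  - pose proof phi_bounds. pose proof psi_bounds. pose proof (abs_psi_pow (2 * e)).
    eapply Rle_trans; [apply Rmult_le_compat_r, Cmod_le_abs_sum; left; apply pow_lt; lra|].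
    assert (Rabs psi <= 1) by (rewrite Rabs_left; lra).
    rewrite <- tech_pow_Rmult, !Rabs_mult, (Rabs_right 2), (Rabs_left (-2)) by lra.
    pose proof (Rabs_pos (psi ^ (2 * e))). nra.
Qed.

Lemma Dset_nonempty N : 1 <= N -> exists d, Dset N d.
Proof.
  intro HN. eexists. exists 1%Z, 0%Z, 0%Z, 0%Z, 1%Z, 0%Z, 0%Z, 0%Z.
  assert (Hbox : inbox N 1 0 0 0) by (unfold inbox; rewrite Rabs_R0, Rabs_R1; repeat split; lra).
  assert (Hne : elt 1 0 0 0 <> RtoC 0).
  { rewrite elt_zi_val. unfold zi_val, RtoC; simpl. intros [= E]. lra. }
  repeat split; try apply Hbox; exact Hne.
Qed.

Lemma DNN_bounds N :
  1 <= N -> / (48 * (N * N)) <= DNN N /\ (forall d, Dset N d -> DNN N <= d).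
Proof.
  intro HN. destruct (Glb_Rbar_correct (Dset N)) as [Hlb Hglb].
  destruct (Dset_nonempty N HN) as [d0 Hd0].
  assert (Hl : Rbar_le (/ (48 * (N * N))) (Glb_Rbar (Dset N))).
  { apply Hglb. intros d Hd. apply Dset_ge; [lra|exact Hd]. }
  pose proof (Hlb d0 Hd0) as Hu.
  unfold DNN. destruct (Glb_Rbar (Dset N)); simpl in *; try contradiction.
  split; [exact Hl|]. intros d Hd. exact (Hlb d Hd).
Qed.

Lemma ln_pos_of_gt1 x : 1 < x -> 0 < ln x.
Proof. intro H. rewrite <- ln_1. apply ln_increasing; lra. Qed.

Lemma INR_le_pow x n : 2 <= x -> INR n <= x ^ n.
Proof.
  intro Hx. induction n as [|n IH]; [simpl; lra|].
  rewrite S_INR. simpl. assert (1 <= x ^ n) by (apply pow_R1_Rle; lra). nra.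
Qed.

Lemma expo_ge_sq j : (j * j <= expo j)%nat.
Proof. induction j; simpl; nia. Qed.

Lemma limsup_infty_eq f l :
  (forall eps, 0 < eps -> exists M, forall N, M <= N -> f N <= l + eps) ->
  (forall eps M, 0 < eps -> exists N, M <= N /\ l - eps <= f N) ->
  limsup_infty f = Finite l.
Proof.
  intros Hup Hlow.
  assert (Hsup_ge : forall M, Rbar_le l (sup_from f M)).
  { intro M. unfold sup_from.
    destruct (Rbar_ex_lub (fun y => exists N, M <= N /\ y = Finite (f N))) as [s Hs].
    rewrite (Rbar_is_lub_unique _ s Hs). destruct Hs as [Hub _].
    destruct s as [s| |]; simpl; trivial.
    - destruct (Rle_or_lt l s) as [|Hs]; [assumption|exfalso].
      destruct (Hlow ((l - s) / 2) M) as [N [HN HfN]]; [lra|].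
      specialize (Hub (f N) (ex_intro _ N (conj HN eq_refl))). simpl in Hub. lra.
    - destruct (Hlow 1 M) as [N [HN _]]; [lra|].
      exact (Hub (f N) (ex_intro _ N (conj HN eq_refl))). }
  assert (Hsup_le : forall eps, 0 < eps -> exists M, Rbar_le (sup_from f M) (l + eps)).
  { intros eps Heps. destruct (Hup eps Heps) as [M HM]. exists M.
    unfold sup_from.
    destruct (Rbar_ex_lub (fun y => exists N, M <= N /\ y = Finite (f N))) as [s Hs].
    rewrite (Rbar_is_lub_unique _ s Hs). apply Hs. intros y [N [HN Hy]]. rewrite Hy. apply HM, HN. }
  unfold limsup_infty.
  destruct (Rbar_ex_glb (fun z => exists M, z = sup_from f M)) as [g Hg].
  rewrite (Rbar_is_glb_unique _ g Hg). destruct Hg as [Hlb Hgreatest].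
  assert (Hg_ge : Rbar_le l g) by (apply Hgreatest; intros z [M ->]; apply Hsup_ge).
  assert (Hg_le : forall eps, 0 < eps -> Rbar_le g (l + eps)).
  { intros eps Heps. destruct (Hsup_le eps Heps) as [M HM].
    eapply Rbar_le_trans; [apply Hlb; exists M; reflexivity|exact HM]. }
  destruct g as [g| |]; simpl in *; try contradiction.
  - f_equal. destruct (Rle_or_lt g l) as [|Hgl]; [lra|].
    specialize (Hg_le ((g - l) / 2)). simpl in Hg_le. lra.
  - specialize (Hg_le 1 Rlt_0_1). contradiction.
Qed.

Lemma log_ratio_le N : 1 < N -> - ln (DNN N) / ln N <= 2 + ln 48 / ln N.
Proof.
  intro HN. destruct (DNN_bounds N) as [Hlow _]; [lra|].
  assert (HlnN : 0 < ln N) by (apply ln_pos_of_gt1; exact HN).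
  assert (Hpos : 0 < / (48 * (N * N))) by (apply Rinv_0_lt_compat; nra).
  apply ln_le in Hlow; [|exact Hpos].
  rewrite ln_Rinv, !ln_mult in Hlow by nra.
  apply (Rmult_le_reg_r (ln N)); [exact HlnN|].
  unfold Rdiv. rewrite Rmult_plus_distr_r, !Rmult_assoc, Rinv_l by lra. lra.
Qed.

Lemma limsup_upper eps :
  0 < eps -> exists M, forall N, M <= N -> - ln (DNN N) / ln N <= 2 + eps.
Proof.
  intro Heps. exists (Rmax 2 (exp (ln 48 / eps))). intros N HN.
  assert (H2 : 2 <= N) by (eapply Rle_trans; [apply Rmax_l|exact HN]).
  assert (Hexp : exp (ln 48 / eps) <= N) by (eapply Rle_trans; [apply Rmax_r|exact HN]).
  assert (HlnN : 0 < ln N) by (apply ln_pos_of_gt1; lra).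
  assert (Hln : ln 48 / eps <= ln N)
    by (rewrite <- (ln_exp (ln 48 / eps)); apply ln_le; [apply exp_pos|exact Hexp]).
  assert (ln 48 / ln N <= eps).
  { apply (Rmult_le_reg_r (ln N / eps)); [apply Rdiv_lt_0_compat; lra|].
    replace (ln 48 / ln N * (ln N / eps)) with (ln 48 / eps) by (field; lra).
    replace (eps * (ln N / eps)) with (ln N) by (field; lra). exact Hln. }
  pose proof (log_ratio_le N ltac:(lra)). lra.
Qed.

Lemma ratio_ge a b L eps e j :
  0 <= a -> 0 <= b -> 0 < L -> 0 < eps -> 1 <= j -> j * j <= e ->
  2 * a + 3 * b <= eps * L * j ->
  2 - eps <= (2 * e * L - b) / (a + j * b + e * L).
Proof.
  intros Ha Hb HL Heps Hj He Hj_large.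
  assert (He1 : 1 <= e) by nra.
  assert (0 <= j * b) by nra. assert (0 < e * L) by nra.
  assert (Hden : 0 < a + j * b + e * L) by lra.
  apply (Rmult_le_reg_r (a + j * b + e * L)); [exact Hden|].
  unfold Rdiv. rewrite Rmult_assoc, Rinv_l, Rmult_1_r by lra.
  assert (2 * a + 2 * j * b + b <= eps * L * (j * j)) by nra.
  assert (eps * L * (j * j) <= eps * L * e) by (apply Rmult_le_compat_l; nra).
  nra.
Qed.

Lemma limsup_lower eps M :
  0 < eps -> exists N, M <= N /\ 2 - eps <= - ln (DNN N) / ln N.
Proof.
  intro Heps. pose proof phi_bounds.
  set (L := ln phi). assert (HL : 0 < L) by (apply ln_pos_of_gt1; lra).
  set (a := ln 24). assert (Ha : 0 < a) by (apply ln_pos_of_gt1; lra).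
  set (b := ln 4). assert (Hb : 0 < b) by (apply ln_pos_of_gt1; lra).
  destruct (INR_archimed 1 (Rmax 1 (Rmax M ((2 * a + 3 * b) / (eps * L))))) as [j Hj]; [lra|].
  rewrite Rmult_1_r in Hj.
  pose proof (Rmax_l 1 (Rmax M ((2 * a + 3 * b) / (eps * L)))) as Hj1.
  pose proof (Rmax_r 1 (Rmax M ((2 * a + 3 * b) / (eps * L)))) as Hj2.
  pose proof (Rmax_l M ((2 * a + 3 * b) / (eps * L))) as HjM.
  pose proof (Rmax_r M ((2 * a + 3 * b) / (eps * L))) as Hjeps.
  set (e := expo j). set (N := 24 * (4 ^ j * phi ^ e)).
  destruct (Dset_witness j) as [d [Hd Hdbound]]. fold e N in Hd, Hdbound.
  assert (P4 : INR j <= 4 ^ j) by (apply INR_le_pow; lra).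
  assert (Pphi : 1 <= phi ^ e) by (apply pow_R1_Rle; lra).
  assert (HN1 : 1 < N) by (unfold N; nra).
  destruct (DNN_bounds N) as [Hlow Hmin]; [lra|].
  assert (HD : 0 < DNN N) by (eapply Rlt_le_trans; [|exact Hlow]; apply Rinv_0_lt_compat; nra).
  assert (Hphi2e : 0 < phi ^ (2 * e)) by (apply pow_lt; lra).
  assert (HlnD : 2 * INR e * L - b <= - ln (DNN N)).
  { assert (Hprod : DNN N * phi ^ (2 * e) <= 4)
      by (eapply Rle_trans; [apply Rmult_le_compat_r; [lra|apply Hmin, Hd]|exact Hdbound]).
    apply ln_le in Hprod; [|nra]. rewrite ln_mult, ln_pow, mult_INR in Hprod by lra.
    unfold b, L. simpl INR in Hprod. lra. }
  assert (HlnN : ln N = a + INR j * b + INR e * L).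
  { unfold N. rewrite !ln_mult, !ln_pow by (try apply Rmult_lt_0_compat; try apply pow_lt; lra).
    rewrite (ln_pow phi) by lra. unfold a, b, L. ring. }
  exists N. split.
  - unfold N. nra.
  - apply Rle_trans with ((2 * INR e * L - b) / ln N).
    + rewrite HlnN. apply ratio_ge; try lra.
      * rewrite <- mult_INR. apply le_INR, expo_ge_sq.
      * apply (Rmult_le_reg_r (/ (eps * L))); [apply Rinv_0_lt_compat; nra|].
        replace (eps * L * INR j * / (eps * L)) with (INR j) by (field; lra). lra.
    + unfold Rdiv. apply Rmult_le_compat_r; [|exact HlnD].
      left. apply Rinv_0_lt_compat. apply ln_pos_of_gt1. exact HN1.
Qed.

Theorem corollary3p3 :
  limsup_infty (fun N => - ln (DNN N) / ln N) = Finite 2.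
Proof. apply limsup_infty_eq; [exact limsup_upper | exact limsup_lower]. Qed.
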